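(* Let $\varphi(x)$ be a first-order formula of quantifier rank at most $q$ over a finite modal signature, and suppose $\varphi$ is invariant under graded bisimulation $\sim_{\mathrm{C}}$ on the class of all pointed Kripke structures (respectively, on the class of all finite pointed Kripke structures). Let $\ell=2^q-1$. Then for every pointed Kripke structure (respectively, every finite pointed Kripke structure) $\mathcal{M},w$ such that $\mathcal{M}\restriction N^\ell(w),w$ is rooted tree-like, we have $$\mathcal{M}\models\varphi[w]\iff \mathcal{M}\restriction N^\ell(w)\models\varphi[w].$$
   Context: A finite modal signature consists of a finite set $I$ of agents and a finite set $J$ of basic propositions. A Kripke structure is $\mathcal{M}=(W,(E_i)_{i\in I},(P_j)_{j\in J})$ with $W\neq\emptyset$, $E_i\subseteq W\times W$, $P_j\subseteq W$, viewed as a relational structure with binary relations $E_i$ and unary relations $P_j$; a pointed Kripke structure $\mathcal{M},w$ has a distinguished world $w$, and $\varphi(x)$ is evaluated by assigning $w$ to $x$. $E_i[u]=\{v:(u,v)\in E_i\}$. A graded bisimulation between $\mathcal{M}$ and $\mathcal{M}'=(W',(E'_i),(P'_j))$ is a non-empty relation $Z\subseteq W\times W'$ such that for all $(u,u')\in Z$: (atom equivalence) $u\in P_j\iff u'\in P'_j$ for all $j$; (graded forth) for every $i$ and $k\ge1$ and pairwise distinct $v_1,\dots,v_k\in E_i[u]$ there are pairwise distinct $v'_1,\dots,v'_k\in E'_i[u']$ with $(v_m,v'_m)\in Z$ for all $m$; (graded back) symmetrically. $\mathcal{M},w\sim_{\mathrm{C}}\mathcal{M}',w'$ if such $Z$ exists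 with $(w,w')\in Z$. The $\ell$-neighbourhood $N^\ell(w)$ of $w$ is the set of worlds at distance at most $\ell$ from $w$ in the undirected graph on $W$ whose edges are given by the union of the symmetrisations of all $E_i$; $\mathcal{M}\restriction N^\ell(w)$ is the induced substructure on $N^\ell(w)$. $\mathcal{M}\restriction N^\ell(w),w$ is rooted tree-like (equivalently, $\mathcal{M},w$ is rooted tree-like to depth $\ell$) if, within $N^\ell(w)$, the symmetrisations of the $E_i$ are pairwise disjoint, their union is acyclic (so it forms an undirected tree with root $w$), and every $E_i$-edge within $N^\ell(w)$ is directed away from the root $w$. *)

From Stdlib Require Import List Arith.
Import ListNotations.

Set Implicit Arguments.

Section Modal.
Variables (I J : Type).

Definition finite_type (T : Type) : Prop := exists l : list T, forall x : T, In x l.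

(** Kripke structures (W nonempty is ensured by the distinguished world). *)
Record Kripke := {
  world : Type;
  rel : I -> world -> world -> Prop;
  prop : J -> world -> Prop
}.

Definition finite_kripke (M : Kripke) : Prop := finite_type (world M).

Inductive form :=
| FRel  : I -> nat -> nat -> form
| FProp : J -> nat -> form
| FEq   : nat -> nat -> form
| FFalse : form
| FNot  : form -> form
| FAnd  : form -> form -> form
| FOr   : form -> form -> form
| FImp  : form -> form -> form
| FEx   : nat -> form -> form
| FAll  : nat -> form -> form.

Fixpoint qrank (f : form) : nat :=
  match f with
  | FRel _ _ _ | FProp _ _ | FEq _ _ | FFalse => 0
  | FNot g => qrank g
  | FAnd g h | FOr g h | FImp g h => Nat.max (qrank g) (qrank h)
  | FEx _ g | FAll _ g => S (qrank g)
  end.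

Fixpoint free_in (f : form) (y : nat) : Prop :=
  match f with
  | FRel _ a b => y = a \/ y = b
  | FProp _ a => y = a
  | FEq a b => y = a \/ y = b
  | FFalse => False
  | FNot g => free_in g y
  | FAnd g h | FOr g h | FImp g h => free_in g y \/ free_in h y
  | FEx x g | FAll x g => y <> x /\ free_in g y
  end.

Definition upd {W : Type} (e : nat -> W) (x : nat) (v : W) : nat -> W :=
  fun y => if Nat.eqb y x then v else e y.

Fixpoint holds (M : Kripke) (e : nat -> world M) (f : form) : Prop :=
  match f with
  | FRel i a b => rel M i (e a) (e b)
  | FProp j a => prop M j (e a)
  | FEq a b => e a = e b
  | FFalse => False
  | FNot g => ~ holds M e g
  | FAnd g h => holds M e g /\ holds M e h
  | FOr g h => holds M e g \/ holds M e h
  | FImp g h => holds M e g -> holds M e h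
  | FEx x g => exists v, holds M (upd e x v) g
  | FAll x g => forall v, holds M (upd e x v) g
  end.

(** The formula phi(x) has x = variable 0; M |= phi[w] assigns w to x
    (other variables get w too, irrelevant when phi has only x free). *)
Definition sat (M : Kripke) (f : form) (w : world M) : Prop :=
  holds M (fun _ => w) f.

Definition graded_bisim (M M' : Kripke) (Z : world M -> world M' -> Prop) : Prop :=
  (exists u u', Z u u') /\
  forall u u', Z u u' ->
    (forall j, prop M j u <-> prop M' j u') /\
    (forall i (vs : list (world M)), 1 <= length vs -> NoDup vs ->
        Forall (rel M i u) vs ->
        exists vs' : list (world M'), NoDup vs' /\ Forall (rel M' i u') vs' /\
                                      Forall2 Z vs vs') /\
    (forall i (vs' : list (world M')), 1 <= length vs' -> NoDup vs' ->
        Forall (rel M' i u') vs' ->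
        exists vs : list (world M), NoDup vs /\ Forall (rel M i u) vs /\
                                    Forall2 Z vs vs').

Definition gbisimilar (M : Kripke) (w : world M) (M' : Kripke) (w' : world M') : Prop :=
  exists Z, graded_bisim M M' Z /\ Z w w'.

Definition adj (M : Kripke) (u v : world M) : Prop :=
  exists i, rel M i u v \/ rel M i v u.

Inductive reach (M : Kripke) (w : world M) : nat -> world M -> Prop :=
| reach0 : forall n, reach M w n w
| reachS : forall n u v, reach M w n u -> adj M u v -> reach M w (S n) v.

Definition dist_eq (M : Kripke) (w : world M) (n : nat) (v : world M) : Prop :=
  reach M w n v /\ forall m, m < n -> ~ reach M w m v.

Definition restrict (M : Kripke) (w : world M) (l : nat) : Kripke :=
  {| world := { v : world M | reach M w l v };
     rel := fun i a b => rel M i (proj1_sig a) (proj1_sig b);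
     prop := fun j a => prop M j (proj1_sig a) |}.

Definition restrict_root (M : Kripke) (w : world M) (l : nat) : world (restrict M w l) :=
  exist _ w (reach0 M w l).

Fixpoint chain (M : Kripke) (l : list (world M)) : Prop :=
  match l with
  | a :: ((b :: _) as t) => adj M a b /\ chain M t
  | _ => True
  end.

Definition tree_like (M : Kripke) (w : world M) (l : nat) : Prop :=
  let N := reach M w l in
  (forall i i' u v, i <> i' -> N u -> N v ->
      ~ ((rel M i u v \/ rel M i v u) /\ (rel M i' u v \/ rel M i' v u))) /\
  (* the union of the symmetrisations is acyclic within N: no loops ... *)
  (forall u, N u -> ~ adj M u u) /\
  (* ... and no cycles of length >= 3 through distinct vertices *)
  (forall (v0 : world M) (rest : list (world M)),
      Forall N (v0 :: rest) -> NoDup (v0 :: rest) -> 2 <= length rest ->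
      chain M (v0 :: rest) -> ~ adj M (last rest v0) v0) /\
  (forall i u v, N u -> N v -> rel M i u v ->
      exists n, dist_eq M w n u /\ dist_eq M w (S n) v).

End Modal.

Arguments restrict {I J} M w l.
Arguments restrict_root {I J} M w l.

From Stdlib Require Import List Arith Lia Classical.
Import ListNotations.

Set Implicit Arguments.

(* Let N be the ball of radius 2^q - 1 around w.  The disjoint unions
   U1 = M + (q+1) M + (q+1) N  and  U0 = N + (q+1) M + (q+1) N
   contain M resp. N as summands, so M, w is graded bisimilar to U1, w and N, w to U0, w
   (all finite when M is).  Duplicator wins the q-round Ehrenfeucht-Fraisse game on U1, w
   and U0, w: with k rounds left, a pebble within distance 2^k of an earlier one is
   answered by the same point of M in the summand holding the partner of that earlier
   pebble, any other pebble by the same point in a fresh summand of the same kind.  So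
   U1 and U0 agree on phi at w, and bisimulation invariance transfers this to M and N. *)

Section Reach.
Context {I J : Type} (M : Kripke I J).

Lemma adj_sym u v : adj M u v -> adj M v u.
Proof. intros [i H]; exists i; tauto. Qed.

Lemma reach_le x m y : reach M x m y -> forall n, m <= n -> reach M x n y.
Proof.
  induction 1 as [k|k u v _ IH Huv]; intros n Hn; [constructor|].
  destruct n as [|n]; [lia|].
  apply reachS with u; [apply IH; lia | exact Huv].
Qed.

Lemma reach_trans x m y n z : reach M x m y -> reach M y n z -> reach M x (m + n) z.
Proof.
  intros Hxy Hyz; induction Hyz as [n|n u v _ IH Huv].
  - apply reach_le with m; [exact Hxy | lia].
  - rewrite Nat.add_succ_r; apply reachS with u; assumption.
Qed.

Lemma reach_sym x n y : reach M x n y -> reach M y n x.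
Proof.
  induction 1 as [k|k u v _ IH Huv]; [constructor|].
  apply (@reach_trans v 1 u k x); [|exact IH].
  apply reachS with v; [constructor | apply adj_sym, Huv].
Qed.

Inductive reach_in (P : world M -> Prop) (u : world M) : nat -> world M -> Prop :=
| reach_in0 : forall n, P u -> reach_in P u n u
| reach_inS : forall n x y, reach_in P u n x -> adj M x y -> P y -> reach_in P u (S n) y.

Lemma reach_in_reach P u d v : reach_in P u d v -> reach M u d v.
Proof. induction 1; [constructor | eapply reachS; eauto]. Qed.

Lemma reach_in_end P u d v : reach_in P u d v -> P v.
Proof. induction 1; assumption. Qed.

Lemma reach_in_weaken (P Q : world M -> Prop) u d v :
  (forall x, P x -> Q x) -> reach_in P u d v -> reach_in Q u d v.
Proof. intros PQ; induction 1; [constructor | eapply reach_inS]; eauto. Qed.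

Lemma reach_in_of_ball (P : world M -> Prop) u d v :
  (forall y, reach M u d y -> P y) -> reach M u d v -> reach_in P u d v.
Proof.
  intros ball Huv; induction Huv as [n|n x y Hux IH Hxy].
  - constructor; apply ball; constructor.
  - apply reach_inS with x; [|exact Hxy | apply ball, reachS with x; assumption].
    apply IH; intros z Hz; apply ball, reach_le with n; [exact Hz | lia].
Qed.

End Reach.

Section Embedding.
Context {I J : Type} (M M' : Kripke I J) (f : world M -> world M').
Hypotheses
  (f_inj : forall u v, f u = f v -> u = v)
  (f_prop : forall j u, prop M j u <-> prop M' j (f u))
  (f_rel : forall i u v, rel M i u v <-> rel M' i (f u) (f v))
  (f_succ : forall i u v', rel M' i (f u) v' -> exists v, v' = f v).

Lemma Forall2_graph (l : list (world M)) : Forall2 (fun v v' => v' = f v) l (map f l).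
Proof. induction l; constructor; auto. Qed.

Lemma gbisimilar_embedding u : gbisimilar M u M' (f u).
Proof.
  exists (fun v v' => v' = f v); split; [|reflexivity].
  split; [exists u, (f u); reflexivity|].
  intros v _ ->; split; [intros j; apply f_prop | split].
  - intros i vs _ Hnd Hrel; exists (map f vs); split; [|split].
    + apply NoDup_map_NoDup_ForallPairs; [intros ? ? _ _; apply f_inj | exact Hnd].
    + apply Forall_map; revert Hrel; apply Forall_impl; intros x; apply f_rel.
    + apply Forall2_graph.
  - intros i vs' _ Hnd Hrel.
    assert (Himg : Forall (fun v' => exists x, v' = f x) vs')
      by (revert Hrel; apply Forall_impl; intros x; apply f_succ).
    apply Forall_image in Himg as [vs ->].
    exists vs; split; [|split].
    + exact (NoDup_map_inv _ _ Hnd).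
    + rewrite Forall_map in Hrel; revert Hrel; apply Forall_impl; intros x; apply f_rel.
    + apply Forall2_graph.
Qed.

End Embedding.

Lemma finite_sig {T : Type} (P : T -> Prop) (l : list T) :
  (forall x, P x -> In x l) -> finite_type {x | P x}.
Proof.
  intros Hl.
  assert (lift : forall l, exists l' : list {x | P x}, forall y, In (proj1_sig y) l -> In y l').
  { clear Hl; induction l0 as [|x l0 [l' IH]]; [exists []; simpl; tauto|].
    destruct (classic (P x)) as [px|npx].
    - exists (exist _ x px :: l'); intros [y py] [Hxy|Hy]; simpl in *.
      + subst; left; f_equal; apply proof_irrelevance.
      + right; apply (IH (exist _ y py)), Hy.
    - exists l'; intros [y py] [Hxy|Hy]; simpl in *.
      + subst; contradiction.
      + apply (IH (exist _ y py)), Hy. }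
  destruct (lift l) as [l' Hl']; exists l'; intros y; apply Hl', Hl, proj2_sig.
Qed.

Lemma finite_restrict {I J : Type} (M : Kripke I J) w l :
  finite_kripke M -> finite_kripke (restrict M w l).
Proof. intros [lM HM]; apply finite_sig with lM; auto. Qed.

Lemma upd_eq {W : Type} (e : nat -> W) x v : upd e x v x = v.
Proof. unfold upd; rewrite Nat.eqb_refl; reflexivity. Qed.

Lemma upd_neq {W : Type} (e : nat -> W) x v n : n <> x -> upd e x v n = e n.
Proof. unfold upd; intros H; destruct (Nat.eqb_spec n x); congruence. Qed.

Lemma exists_fresh {A : Type} (g : nat -> A) (L : list A) n :
  (forall i j, g i = g j -> i = j) -> length L <= n -> exists i, i <= n /\ ~ In (g i) L.
Proof.
  intros g_inj HL; apply NNPP; intros Hnone.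
  assert (Hincl : incl (map g (seq 0 (S n))) L).
  { intros a Ha; apply in_map_iff in Ha as [i [<- Hi]]; apply in_seq in Hi.
    apply NNPP; intros Hni; apply Hnone; exists i; split; [lia | exact Hni]. }
  apply NoDup_incl_length in Hincl; [rewrite length_map, length_seq in Hincl; lia|].
  apply NoDup_map_NoDup_ForallPairs; [intros i j _ _; apply g_inj | apply seq_NoDup].
Qed.

Lemma pow2_step k : 1 <= 2 ^ k /\ 2 ^ S k = 2 ^ k + 2 ^ k.
Proof.
  split; [apply Nat.pow_lower_bound; discriminate | rewrite Nat.pow_succ_r'; lia].
Qed.

Section Amplification.
Context {I J : Type} (M : Kripke I J) (w : world M) (q : nat).

Local Notation radius := (2 ^ q - 1).

(* A world of [amplify b0] is a point of M tagged with its summand: [None] is the first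
   summand (M if [b0], N otherwise), [Some (true, i)] the i-th copy of M and
   [Some (false, i)] the i-th copy of N. *)
Definition copy := option (bool * nat).

Definition copy_bounded (c : copy) : Prop :=
  match c with None => True | Some (_, i) => i <= q end.

Definition full_copy (b0 : bool) (c : copy) : bool :=
  match c with None => b0 | Some (b, _) => b end.

Definition in_copy (b0 : bool) (c : copy) (x : world M) : Prop :=
  copy_bounded c /\ (full_copy b0 c = true \/ reach M w radius x).

Definition amplify (b0 : bool) : Kripke I J :=
  {| world := { p : copy * world M | in_copy b0 (fst p) (snd p) };
     rel := fun i a b => fst (proj1_sig a) = fst (proj1_sig b) /\
                         rel M i (snd (proj1_sig a)) (snd (proj1_sig b));
     prop := fun j a => prop M j (snd (proj1_sig a)) |}.

Local Notation U := amplify.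
Local Notation copy_of a := (fst (proj1_sig a)).
Local Notation base a := (snd (proj1_sig a)).

Lemma amplify_world_eq b (a a' : world (U b)) :
  copy_of a = copy_of a' -> base a = base a' -> a = a'.
Proof.
  destruct a as [[c u] pu], a' as [[c' u'] pu']; simpl; intros -> ->.
  f_equal; apply proof_irrelevance.
Qed.

Lemma reach_amplify_copy b (a a' : world (U b)) d :
  reach (U b) a d a' -> copy_of a = copy_of a'.
Proof. induction 1 as [|n x y _ IH [i [[E _]|[E _]]]]; congruence. Qed.

Lemma reach_amplify_in b (a a' : world (U b)) d :
  reach (U b) a d a' -> reach_in M (in_copy b (copy_of a)) (base a) d (base a').
Proof.
  intros H; induction H as [n|n x y Hx IH Hxy]; [constructor; exact (proj2_sig a)|].
  apply reach_inS with (base x); [exact IH | |].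
  - destruct Hxy as [i [[_ Hi]|[_ Hi]]]; exists i; tauto.
  - rewrite (reach_amplify_copy (reachS Hx Hxy)); exact (proj2_sig y).
Qed.

Lemma reach_in_amplify b (a : world (U b)) d v (pv : in_copy b (copy_of a) v) :
  reach_in M (in_copy b (copy_of a)) (base a) d v ->
  reach (U b) a d (exist _ (copy_of a, v) pv).
Proof.
  destruct a as [[c u] pu]; simpl; intros H; revert pv.
  induction H as [n|n x y Hx IH [i Hi] Hy]; intros pv.
  - rewrite (proof_irrelevance _ pu pv); constructor.
  - apply reachS with (exist _ (c, x) (reach_in_end Hx)); [apply IH|].
    exists i; simpl; tauto.
Qed.

(* Invariant of Duplicator's strategy with k rounds left: pebbles within distance 2^k
   of each other on one side lie in the same summand on the other side, pebbles in
   summands of different kinds lie deep inside the ball, and few summands are used. *)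
Record ef_inv (b1 b2 : bool) (k : nat) (e1 : nat -> world (U b1)) (e2 : nat -> world (U b2))
  : Prop := {
  inv_base : forall n, base (e1 n) = base (e2 n);
  inv_kind : forall n, full_copy b1 (copy_of (e1 n)) = full_copy b2 (copy_of (e2 n)) \/
                       reach M w (2 ^ q - 2 ^ k) (base (e1 n));
  inv_copy12 : forall n m, reach (U b1) (e1 n) (2 ^ k) (e1 m) -> copy_of (e2 n) = copy_of (e2 m);
  inv_copy21 : forall n m, reach (U b2) (e2 n) (2 ^ k) (e2 m) -> copy_of (e1 n) = copy_of (e1 m);
  inv_copies : exists L1 L2 : list copy, length L1 <= q - k + 1 /\ length L2 <= q - k + 1 /\
                 forall n, In (copy_of (e1 n)) L1 /\ In (copy_of (e2 n)) L2
}.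
Arguments ef_inv : clear implicits.

Lemma ef_inv_sym b1 b2 k e1 e2 : ef_inv b1 b2 k e1 e2 -> ef_inv b2 b1 k e2 e1.
Proof.
  intros [Hbase Hkind H12 H21 [L1 [L2 [HL1 [HL2 HL]]]]]; constructor; auto.
  - intros n; rewrite <- Hbase; destruct (Hkind n); auto.
  - exists L2, L1; repeat split; auto; apply HL.
Qed.

Lemma ef_inv_rel b1 b2 k e1 e2 i a b : ef_inv b1 b2 k e1 e2 ->
  rel (U b1) i (e1 a) (e1 b) -> rel (U b2) i (e2 a) (e2 b).
Proof.
  intros inv Hab; split.
  - apply (inv_copy12 inv), reach_le with 1; [|apply pow2_step].
    apply reachS with (e1 a); [constructor | exists i; left; exact Hab].
  - rewrite <- !(inv_base inv); exact (proj2 Hab).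
Qed.

Lemma ef_inv_eq b1 b2 k e1 e2 a b : ef_inv b1 b2 k e1 e2 -> e1 a = e1 b -> e2 a = e2 b.
Proof.
  intros inv E; apply amplify_world_eq.
  - apply (inv_copy12 inv); rewrite E; constructor.
  - rewrite <- !(inv_base inv), E; reflexivity.
Qed.

Lemma copy_agree_upd b1 b2 k e1 e2 x (a1 : world (U b1)) (a2 : world (U b2)) :
  (forall n m, reach (U b1) (e1 n) (2 ^ S k) (e1 m) -> copy_of (e2 n) = copy_of (e2 m)) ->
  (forall m, m <> x -> reach (U b1) a1 (2 ^ k) (e1 m) -> copy_of a2 = copy_of (e2 m)) ->
  forall n m, reach (U b1) (upd e1 x a1 n) (2 ^ k) (upd e1 x a1 m) ->
    copy_of (upd e2 x a2 n) = copy_of (upd e2 x a2 m).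
Proof.
  intros Hold Hnew n m.
  destruct (Nat.eq_dec n x) as [->|Hn]; destruct (Nat.eq_dec m x) as [->|Hm];
    rewrite ?upd_eq, ?upd_neq by assumption; intros H.
  - reflexivity.
  - exact (Hnew m Hm H).
  - symmetry; exact (Hnew n Hn (reach_sym H)).
  - apply Hold, reach_le with (2 ^ k); [exact H | pose proof (pow2_step k); lia].
Qed.

Lemma ef_inv_upd b1 b2 k e1 e2 x (a1 : world (U b1)) (a2 : world (U b2)) :
  S k <= q -> ef_inv b1 b2 (S k) e1 e2 ->
  base a1 = base a2 ->
  full_copy b1 (copy_of a1) = full_copy b2 (copy_of a2) \/ reach M w (2 ^ q - 2 ^ k) (base a1) ->
  (forall m, m <> x -> reach (U b1) a1 (2 ^ k) (e1 m) -> copy_of a2 = copy_of (e2 m)) ->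
  (forall m, m <> x -> reach (U b2) a2 (2 ^ k) (e2 m) -> copy_of a1 = copy_of (e1 m)) ->
  ef_inv b1 b2 k (upd e1 x a1) (upd e2 x a2).
Proof.
  intros Hk [Hbase Hkind H12 H21 [L1 [L2 [HL1 [HL2 HL]]]]] Ha Hak Hnew12 Hnew21.
  constructor.
  - intros n; destruct (Nat.eq_dec n x) as [->|Hn];
      rewrite ?upd_eq, ?upd_neq by assumption; auto.
  - intros n; destruct (Nat.eq_dec n x) as [->|Hn];
      rewrite ?upd_eq, ?upd_neq by assumption; [exact Hak|].
    destruct (Hkind n) as [E|Hdeep]; [left; exact E | right].
    apply reach_le with (2 ^ q - 2 ^ S k); [exact Hdeep | pose proof (pow2_step k); lia].
  - apply copy_agree_upd; assumption.
  - apply copy_agree_upd; assumption.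
  - exists (copy_of a1 :: L1), (copy_of a2 :: L2); simpl; split; [lia | split; [lia|]].
    intros n; destruct (Nat.eq_dec n x) as [->|Hn];
      rewrite ?upd_eq, ?upd_neq by assumption; simpl; [auto|].
    split; right; apply HL.
Qed.

Lemma ef_lift_path b1 b2 k e1 e2 n (a1 : world (U b1)) :
  S k <= q -> ef_inv b1 b2 (S k) e1 e2 -> reach (U b1) (e1 n) (2 ^ k) a1 ->
  exists a2 : world (U b2), copy_of a2 = copy_of (e2 n) /\ base a2 = base a1 /\
                            reach (U b2) (e2 n) (2 ^ k) a2.
Proof.
  intros Hk inv Hr.
  pose proof (pow2_step k) as Hpow; pose proof (Nat.pow_le_mono_r 2 _ _ (Nat.neq_succ_0 1) Hk).
  pose proof (reach_amplify_in Hr) as Hin1.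
  pose proof (proj1 (proj2_sig (e2 n))) as Hbounded.
  assert (Hpath : reach_in M (in_copy b2 (copy_of (e2 n))) (base (e2 n)) (2 ^ k) (base a1)).
  { rewrite <- (inv_base inv n).
    destruct (full_copy b2 (copy_of (e2 n))) eqn:F2.
    - apply reach_in_of_ball; [|exact (reach_in_reach Hin1)].
      intros y _; split; [exact Hbounded | left; exact F2].
    - destruct (full_copy b1 (copy_of (e1 n))) eqn:F1.
      + destruct (inv_kind inv n) as [E|Hdeep]; [congruence|].
        apply reach_in_of_ball; [|exact (reach_in_reach Hin1)].
        intros y Hy; split; [exact Hbounded | right].
        apply reach_le with (2 ^ q - 2 ^ S k + 2 ^ k); [exact (reach_trans Hdeep Hy) | lia].
      + apply (reach_in_weaken (P := in_copy b1 (copy_of (e1 n)))); [|exact Hin1].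
        intros y [_ [E|Hy]]; [congruence | split; [exact Hbounded | right; exact Hy]]. }
  exists (exist _ (copy_of (e2 n), base a1) (reach_in_end Hpath)).
  split; [reflexivity | split; [reflexivity | apply reach_in_amplify, Hpath]].
Qed.

Lemma ef_step_near b1 b2 k e1 e2 x n (a1 : world (U b1)) :
  S k <= q -> ef_inv b1 b2 (S k) e1 e2 -> reach (U b1) (e1 n) (2 ^ k) a1 ->
  exists a2 : world (U b2), ef_inv b1 b2 k (upd e1 x a1) (upd e2 x a2).
Proof.
  intros Hk inv Hr.
  pose proof (pow2_step k) as Hpow; pose proof (Nat.pow_le_mono_r 2 _ _ (Nat.neq_succ_0 1) Hk).
  destruct (ef_lift_path n Hk inv Hr) as [a2 [Hc2 [Hb2 Hr2]]].
  pose proof (reach_amplify_copy Hr) as Hc1.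
  exists a2; apply ef_inv_upd; auto.
  - rewrite Hc2, <- Hc1; destruct (inv_kind inv n) as [E|Hdeep]; [left; exact E | right].
    apply reach_le with (2 ^ q - 2 ^ S k + 2 ^ k); [|lia].
    exact (reach_trans Hdeep (reach_in_reach (reach_amplify_in Hr))).
  - intros m _ Hm; rewrite Hc2; apply (inv_copy12 inv).
    apply reach_le with (2 ^ k + 2 ^ k); [exact (reach_trans Hr Hm) | lia].
  - intros m _ Hm; rewrite <- Hc1; apply (inv_copy21 inv).
    apply reach_le with (2 ^ k + 2 ^ k); [exact (reach_trans Hr2 Hm) | lia].
Qed.

Lemma ef_step_far b1 b2 k e1 e2 x (a1 : world (U b1)) :
  S k <= q -> ef_inv b1 b2 (S k) e1 e2 ->
  (forall n, n <> x -> ~ reach (U b1) (e1 n) (2 ^ k) a1) ->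
  exists a2 : world (U b2), ef_inv b1 b2 k (upd e1 x a1) (upd e2 x a2).
Proof.
  intros Hk inv Hfar.
  destruct (inv_copies inv) as [L1 [L2 [_ [HL2 HL]]]].
  destruct (@exists_fresh _ (fun i => Some (full_copy b1 (copy_of a1), i)) L2 q)
    as [i [Hi Hfresh]]; [intros i j E; injection E; auto | unfold copy in *; lia |].
  exists (exist _ (Some (full_copy b1 (copy_of a1), i), base a1)
            (conj Hi (proj2 (proj2_sig a1)))).
  apply ef_inv_upd; auto.
  - intros m Hm H; exfalso; exact (Hfar m Hm (reach_sym H)).
  - intros m _ H; exfalso; apply Hfresh.
    pose proof (reach_amplify_copy H) as E; simpl in E; rewrite E; apply HL.
Qed.

Lemma ef_step b1 b2 k e1 e2 x (a1 : world (U b1)) :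
  S k <= q -> ef_inv b1 b2 (S k) e1 e2 ->
  exists a2 : world (U b2), ef_inv b1 b2 k (upd e1 x a1) (upd e2 x a2).
Proof.
  intros Hk inv.
  destruct (classic (exists n, reach (U b1) (e1 n) (2 ^ k) a1)) as [[n Hr]|Hfar].
  - exact (ef_step_near x n Hk inv Hr).
  - apply (ef_step_far Hk inv); intros n _ Hr; apply Hfar; exists n; exact Hr.
Qed.

Lemma ef_back_and_forth b1 b2 k e1 e2 x : S k <= q -> ef_inv b1 b2 (S k) e1 e2 ->
  (forall a1, exists a2, ef_inv b1 b2 k (upd e1 x a1) (upd e2 x a2)) /\
  (forall a2, exists a1, ef_inv b1 b2 k (upd e1 x a1) (upd e2 x a2)).
Proof.
  intros Hk inv; split; intros a; [exact (ef_step x a Hk inv)|].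
  destruct (ef_step x a Hk (ef_inv_sym inv)) as [a1 Ha1].
  exists a1; apply ef_inv_sym, Ha1.
Qed.

Lemma ef_holds_iff (phi : form I J) : forall k b1 b2 e1 e2, qrank phi <= k -> k <= q ->
  ef_inv b1 b2 k e1 e2 -> (holds (U b1) e1 phi <-> holds (U b2) e2 phi).
Proof.
  induction phi as [i a b|j a|a b| |phi IH|phi1 IH1 phi2 IH2|phi1 IH1 phi2 IH2
                   |phi1 IH1 phi2 IH2|x phi IH|x phi IH];
    intros k b1 b2 e1 e2 Hq Hk inv; simpl in Hq |- *.
  - split; [apply (ef_inv_rel a b inv) | apply (ef_inv_rel a b (ef_inv_sym inv))].
  - rewrite (inv_base inv); reflexivity.
  - split; [apply (ef_inv_eq a b inv) | apply (ef_inv_eq a b (ef_inv_sym inv))].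
  - reflexivity.
  - rewrite (IH k b1 b2 e1 e2); auto; reflexivity.
  - rewrite (IH1 k b1 b2 e1 e2), (IH2 k b1 b2 e1 e2); auto; try reflexivity; lia.
  - rewrite (IH1 k b1 b2 e1 e2), (IH2 k b1 b2 e1 e2); auto; try reflexivity; lia.
  - rewrite (IH1 k b1 b2 e1 e2), (IH2 k b1 b2 e1 e2); auto; try reflexivity; lia.
  - destruct k as [|k]; [lia|].
    destruct (ef_back_and_forth x Hk inv) as [forth back].
    split; intros [a Ha].
    + destruct (forth a) as [a' Ha']; exists a'.
      apply (IH k b1 b2 _ _ ltac:(lia) ltac:(lia) Ha'), Ha.
    + destruct (back a) as [a' Ha']; exists a'.
      apply (IH k b1 b2 _ _ ltac:(lia) ltac:(lia) Ha'), Ha.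
  - destruct k as [|k]; [lia|].
    destruct (ef_back_and_forth x Hk inv) as [forth back].
    split; intros Ha a.
    + destruct (back a) as [a' Ha']; apply (IH k b1 b2 _ _ ltac:(lia) ltac:(lia) Ha'), Ha.
    + destruct (forth a) as [a' Ha']; apply (IH k b1 b2 _ _ ltac:(lia) ltac:(lia) Ha'), Ha.
Qed.

Definition embed_full (v : world M) : world (U true) :=
  exist _ (None, v) (conj Logic.I (or_introl eq_refl)).

Definition embed_ball (v : world (restrict M w radius)) : world (U false) :=
  exist _ (None, proj1_sig v) (conj Logic.I (or_intror (proj2_sig v))).

Lemma gbisimilar_embed_full v : gbisimilar M v (U true) (embed_full v).
Proof.
  apply gbisimilar_embedding.
  - intros u u' E; exact (f_equal (fun a => base a) E).
  - reflexivity.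
  - intros i u u'; simpl; tauto.
  - intros i u a [Hc _]; exists (base a); apply amplify_world_eq; simpl in *; auto.
Qed.

Lemma gbisimilar_embed_ball v : gbisimilar (restrict M w radius) v (U false) (embed_ball v).
Proof.
  apply gbisimilar_embedding.
  - intros [u pu] [u' pu'] E; apply (f_equal (fun a => base a)) in E; simpl in E; subst.
    f_equal; apply proof_irrelevance.
  - reflexivity.
  - intros i u u'; simpl; tauto.
  - intros i u a [Hc _]; simpl in Hc.
    destruct (proj2_sig a) as [_ [E|Hball]]; [rewrite <- Hc in E; discriminate|].
    exists (exist _ (base a) Hball); apply amplify_world_eq; simpl; auto.
Qed.

Lemma finite_amplify b : finite_kripke M -> finite_kripke (U b).
Proof.
  intros [lM HM].
  set (indices := seq 0 (S q)).
  apply finite_sig with (list_prod (None :: map (fun i => Some (true, i)) indices ++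
                                            map (fun i => Some (false, i)) indices) lM).
  intros [c v] [Hc _]; apply in_prod; [|apply HM].
  destruct c as [[[] i]|]; [right..|left; reflexivity]; apply in_or_app;
    [left | right]; apply in_map_iff; exists i; split; [reflexivity | |reflexivity|];
    apply in_seq; simpl in Hc; lia.
Qed.

Lemma sat_amplify_iff (phi : form I J) : qrank phi <= q ->
  (sat (U true) phi (embed_full w) <-> sat (U false) phi (embed_ball (restrict_root M w radius))).
Proof.
  intros Hq; apply (ef_holds_iff phi Hq (le_n q)).
  constructor; try reflexivity.
  - intros _; right; rewrite Nat.sub_diag; constructor.
  - exists [None], [None]; simpl; repeat split; auto; lia.
Qed.

End Amplification.

Theorem mainTheorem7 :
  forall (I J : Type), finite_type I -> finite_type J ->
  forall (phi : form I J) (q : nat),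
    qrank phi <= q ->
    (forall y, free_in phi y -> y = 0) ->
    let l := 2 ^ q - 1 in
    ((forall (M : Kripke I J) (w : world M) (M' : Kripke I J) (w' : world M'),
        gbisimilar M w M' w' -> (sat M phi w <-> sat M' phi w')) ->
     forall (M : Kripke I J) (w : world M),
       tree_like M w l ->
       (sat M phi w <-> sat (restrict M w l) phi (restrict_root M w l)))
    /\
    ((forall (M : Kripke I J) (w : world M) (M' : Kripke I J) (w' : world M'),
        finite_kripke M -> finite_kripke M' ->
        gbisimilar M w M' w' -> (sat M phi w <-> sat M' phi w')) ->
     forall (M : Kripke I J) (w : world M),
       finite_kripke M -> tree_like M w l ->
       (sat M phi w <-> sat (restrict M w l) phi (restrict_root M w l))).
Proof.
  intros I J _ _ phi q Hq _ l; subst l; split.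
  - intros Hinv M w _.
    rewrite (Hinv _ _ _ _ (gbisimilar_embed_full M w q w)), (sat_amplify_iff M w phi Hq).
    symmetry; apply Hinv, gbisimilar_embed_ball.
  - intros Hinv M w Hfin _.
    rewrite (Hinv _ _ _ _ Hfin (finite_amplify w q true Hfin) (gbisimilar_embed_full M w q w)).
    rewrite (sat_amplify_iff M w phi Hq).
    symmetry; apply Hinv;
      [apply finite_restrict | apply finite_amplify | apply gbisimilar_embed_ball]; exact Hfin.
Qed.
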